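(* Let $\alpha>0$, $\tau=\beta/\alpha\in[0,1)$, $D_0\in\mathbb{R}$, and $p^a_1,p^a_2,p^d_1,p^d_2\in\mathbb{R}$. Let $$X=\frac12\begin{pmatrix}0&0&-1&0\\0&0&0&-1\\-1&\tau&0&\tau\\\tau&-1&\tau&0\end{pmatrix},\qquad Y=\begin{pmatrix}\frac{D_0-(\alpha-\beta)p^d_1}{2(\alpha-\beta)}\\[2pt]\frac{D_0-(\alpha-\beta)p^d_2}{2(\alpha-\beta)}\\[2pt]\frac{D_0-\alpha(p^a_1-p^d_1)}{2\alpha}\\[2pt]\frac{D_0-\alpha(p^a_2-p^d_2)}{2\alpha}\end{pmatrix}.$$ Then $I-X$ is invertible. Moreover, for every initial vector $p_0\in\mathbb{R}^4$, the sequence defined by $p_{t+1}=Xp_t+Y$ converges to $(I-X)^{-1}Y$.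
   Context: The vector $p_t=(p^s_{1t},p^s_{2t},p^c_{1t},p^c_{2t})$ represents the prices set on day $t$ in the two-CP ex ante regulated model. The iteration is the simultaneous best-response update in which each player sets its price using the unconstrained linear demands $d_i=D_0-\alpha p_i+\beta p_j$. *)

From HB Require Import structures.
From mathcomp Require Import all_boot all_order all_algebra.
From mathcomp Require Import all_classical all_reals all_analysis.
Set Implicit Arguments. Unset Strict Implicit. Unset Printing Implicit Defensive.
Import Order.TTheory GRing.Theory Num.Theory.
Local Open Scope ring_scope.

Definition Xmat (R : realType) (tau : R) : 'M[R]_4 :=
  \matrix_(i < 4, j < 4)
    (2^-1 * (match nat_of_ord i, nat_of_ord j with
     | 0, 2 => -1
     | 1, 3 => -1
     | 2, 0 => -1
     | 2, 1 => tau
     | 2, 3 => tau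
     | 3, 0 => tau
     | 3, 1 => -1
     | 3, 2 => tau
     | _, _ => 0
     end)).

Definition Yvec (R : realType) (alpha tau D0 pa1 pa2 pd1 pd2 : R) : 'cV[R]_4 :=
  let beta := tau * alpha in
  \col_(i < 4)
    (match nat_of_ord i with
     | 0 => (D0 - (alpha - beta) * pd1) / (2 * (alpha - beta))
     | 1 => (D0 - (alpha - beta) * pd2) / (2 * (alpha - beta))
     | 2 => (D0 - alpha * (pa1 - pd1)) / (2 * alpha)
     | _ => (D0 - alpha * (pa2 - pd2)) / (2 * alpha)
     end).

Fixpoint iter_seq (R : realType) (X : 'M[R]_4) (Y p0 : 'cV[R]_4) (t : nat)
  : 'cV[R]_4 :=
  match t with
  | 0 => p0
  | t'.+1 => X *m iter_seq X Y p0 t' + Y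
  end.

(* With tau >= 0, every column of |X| sums to (1 + tau)/2 < 1, so X is a
   contraction for the l1 norm.  Hence I - X has trivial kernel, and the
   error p_t - (I - X)^-1 Y of the affine iteration is multiplied at each step
   by X, so its l1 norm decays geometrically. *)
From HB Require Import structures.
From mathcomp Require Import all_boot all_order all_algebra.
From mathcomp Require Import all_classical all_reals all_analysis.
From mathcomp Require Import lra.
Set Implicit Arguments. Unset Strict Implicit. Unset Printing Implicit Defensive.
Import Order.TTheory GRing.Theory Num.Theory.
Import numFieldNormedType.Exports.
Local Open Scope classical_set_scope.
Local Open Scope ring_scope.

Lemma unitmx_ker0 (F : fieldType) n (A : 'M[F]_n) :
  (forall v : 'cV_n, A *m v = 0 -> v = 0) -> A \in unitmx.
Proof.
move=> A_inj; rewrite -row_full_unit -cokermx_eq0; apply/eqP/matrixP => i j.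
have coker_colj : col j (cokermx A) = 0.
  by apply: A_inj; rewrite colE mulmxA mulmx_coker mul0mx.
by have /matrixP/(_ i 0) := coker_colj; rewrite !mxE.
Qed.

Section L1Norm.
Variable R : realType.

Definition l1norm n (v : 'cV[R]_n) : R := \sum_i `|v i 0|.

Lemma l1norm_ge0 n (v : 'cV[R]_n) : 0 <= l1norm v.
Proof. by rewrite sumr_ge0. Qed.

Lemma mx_norm_le_l1norm n (v : 'cV[R]_n.+1) : `|v| <= l1norm v.
Proof.
rewrite [`|v|]mx_normrE; apply: bigmax_le => [|[i j] _]; first exact: l1norm_ge0.
by rewrite (ord1 j) /l1norm (bigD1 i) //= lerDl sumr_ge0.
Qed.

Lemma l1norm_mulmx_le m n (A : 'M[R]_(m, n)) (v : 'cV[R]_n) (k : R) :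
  (forall j, \sum_i `|A i j| <= k) -> l1norm (A *m v) <= k * l1norm v.
Proof.
move=> colsum_le; rewrite /l1norm mulr_sumr.
under eq_bigr do rewrite mxE.
apply: (le_trans (ler_sum _ (fun i _ => ler_norm_sum _ _ _))).
rewrite exchange_big /=; apply: ler_sum => j _.
under eq_bigr do rewrite normrM.
by rewrite -mulr_suml ler_wpM2r.
Qed.

End L1Norm.

Section Contraction.
Variables (R : realType) (n : nat) (X : 'M[R]_n.+1) (k : R).
Hypotheses (k_ge0 : 0 <= k) (k_lt1 : k < 1)
  (X_contract : forall v, l1norm (X *m v) <= k * l1norm v).

Lemma contraction_ker0 (v : 'cV_n.+1) : (1%:M - X) *m v = 0 -> v = 0.
Proof.
move=> /eqP; rewrite mulmxBl mul1mx subr_eq0 => /eqP v_fixed.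
have := X_contract v; rewrite -v_fixed => le_kv.
apply/eqP; rewrite -normr_le0 (le_trans (mx_norm_le_l1norm v)) //.
have : (1 - k) * l1norm v <= 0 by rewrite mulrBl mul1r subr_le0.
by rewrite pmulr_rle0 // subr_gt0.
Qed.

Lemma contraction_unitmx : (1%:M - X) \in unitmx.
Proof. exact/unitmx_ker0/contraction_ker0. Qed.

Lemma affine_iteration_cvg (Y : 'cV_n.+1) (p : nat -> 'cV_n.+1) :
  (forall t, p t.+1 = X *m p t + Y) ->
  p t @[t --> \oo] --> invmx (1%:M - X) *m Y.
Proof.
move=> p_next; set q := invmx (1%:M - X) *m Y.
have q_fixed : X *m q + Y = q.
  have : (1%:M - X) *m q = Y.
    by rewrite /q mulmxA mulmxV ?mul1mx // contraction_unitmx.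
  by rewrite mulmxBl mul1mx => <-; rewrite addrC subrK.
have err_le t : l1norm (p t - q) <= geometric (l1norm (p 0%N - q)) k t.
  elim: t => [|t IH]; first by rewrite /= expr0 mulr1.
  have err_next : p t.+1 - q = X *m (p t - q).
    by rewrite p_next -{1}q_fixed opprD addrACA subrr addr0 mulmxBr.
  rewrite err_next; apply: le_trans (X_contract _) _.
  by rewrite /= exprS mulrCA ler_wpM2l.
have norm_k_lt1 : `|k| < 1 by rewrite ger0_norm.
apply/subr_cvg0/norm_cvg0P.
apply: (squeeze_cvgr _ (cvg_cst 0) (cvg_geometric (l1norm (p 0%N - q)) norm_k_lt1)).
near=> t; rewrite normr_ge0 /=.
exact: le_trans (mx_norm_le_l1norm _) (err_le t).
Unshelve. all: by end_near.
Qed.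

End Contraction.

Lemma Xmat_colsum (R : realType) (tau : R) (j : 'I_4) : 0 <= tau ->
  \sum_i `|Xmat tau i j| = (1 + tau) / 2.
Proof.
move=> tau_ge0; rewrite !big_ord_recl big_ord0 !mxE /=.
case: j => [[|[|[|[|j]]]] lt_j4] //=; rewrite /bump /=;
  rewrite ?(normrM, normrN, normr0, normr1, ger0_norm tau_ge0);
  rewrite ger0_norm ?invr_ge0 //; lra.
Qed.

Theorem theorem9 (R : realType) (alpha tau D0 pa1 pa2 pd1 pd2 : R) :
  0 < alpha -> 0 <= tau -> tau < 1 ->
  let X := Xmat tau in
  let Y := Yvec alpha tau D0 pa1 pa2 pd1 pd2 in
  (1%:M - X) \in unitmx /\
  (forall p0 : 'cV[R]_4,
     iter_seq X Y p0 t @[t --> \oo] --> invmx (1%:M - X) *m Y).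
Proof.
(* alpha > 0 only makes Y meaningful: the argument works for every Y. *)
move=> _ tau_ge0 tau_lt1 X Y.
have X_contract v : l1norm (X *m v) <= (1 + tau) / 2 * l1norm v.
  by apply: l1norm_mulmx_le => j; rewrite Xmat_colsum.
have k_ge0 : 0 <= (1 + tau) / 2 by lra.
have k_lt1 : (1 + tau) / 2 < 1 by lra.
split; first exact: contraction_unitmx k_lt1 X_contract.
by move=> p0; apply: (affine_iteration_cvg k_ge0 k_lt1 X_contract).
Qed.
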